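(* Let $\varphi=\nu\tilde n.\sigma$ be a frame well-formed with respect to $\mathtt{s}\in\tilde n$ such that $\varphi\nvdash\mathtt{s}$. Let $U$, $V$ and $M$ be terms public with respect to $\varphi$, with all variables of $U$ and of $V$ in $\mathrm{dom}(\sigma)$ and $M$ ground. Then $U\sigma[\mathtt{s}/M]=V\sigma[\mathtt{s}/M]$ (syntactic equality) implies $U\sigma=V\sigma$.
   Context: Terms over $\Sigma=\{\mathsf{enc}/3,\mathsf{dec}/2,\mathsf{enca}/3,\mathsf{deca}/2,\mathsf{pub}/1,\mathsf{priv}/1,\langle\cdot,\cdot\rangle/2,\pi_1/1,\pi_2/1,\mathsf{sign}/2,\mathsf{check}/3,\mathsf{retrieve}/1\}$, constants (including $\mathsf{ok}$), names and variables; destructors are $\pi_1,\pi_2,\mathsf{dec},\mathsf{deca},\mathsf{check},\mathsf{retrieve}$. Equational theory $E$: $\pi_i(\langle z_1,z_2\rangle)=z_i$, $\mathsf{dec}(\mathsf{enc}(z_1,z_2,z_3),z_2)=z_1$, $\mathsf{deca}(\mathsf{enca}(z_1,\mathsf{pub}(z_2),z_3),\mathsf{priv}(z_2))=z_1$, $\mathsf{check}(z_1,\mathsf{sign}(z_1,\mathsf{priv}(z_2)),\mathsf{pub}(z_2))=\mathsf{ok}$, $\mathsf{retrieve}(\mathsf{sign}(z_1,z_2))=z_1$. Positions of terms are sequences of positive integers, $T|_p$ the subterm at $p$. A frame $\varphi=\nu\tilde n.\sigma$: finite set of restricted names $\tilde n$ and acyclic substitution $\sigma$. Public term w.r.t.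 $\varphi$: no name of $\tilde n$ and no $\mathsf{priv}$. $\varphi\vdash M$: least relation containing $x\sigma$ for $x\in\mathrm{dom}(\sigma)$ and names outside $\tilde n$, closed under application of symbols other than $\mathsf{priv}$ and under $=_E$. $T[\mathtt{s}/M]$ replaces each occurrence of the name $\mathtt{s}$ by $M$. An encryption occurrence $q$ in $U$ (head of $U|_q$ in $\{\mathsf{enc},\mathsf{enca}\}$) is an agent encryption w.r.t. names $\tilde m$ if $U|_{q\cdot3}\in\tilde m$, and a probabilistic encryption w.r.t. a set of terms $S$ if for all $V\in S$ and $p$ with $V|_p=U|_{q\cdot3}$ we have $p=q'\cdot3$ with $V|_{q'}=U|_q$. $\varphi$ is well-formed w.r.t. $\mathtt{s}$ if (1) every encryption in $\sigma$ is an agent encryption w.r.t. $\tilde n\setminus\{\mathtt{s}\}$ and a probabilistic encryption w.r.t. $\mathrm{ran}(\sigma)$; (2) for all subterms $\mathsf{enc}(M,K,R)$, $\mathsf{enca}(M',K',R')$, $\mathsf{sign}(U,V)$, $\mathsf{pub}(W)$, $\mathsf{priv}(W')$ of $\varphi$, $\mathtt{s}$ does not occur in $K,K',V,W,W',R,R'$; (3) $\varphi$ contains no destructor. *)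

From Stdlib Require Import List Arith.
Import ListNotations.

Inductive term : Type :=
| Var   : nat -> term
| Nam   : nat -> term
| Cst   : nat -> term
| Enc   : term -> term -> term -> term
| Dec   : term -> term -> term
| Enca  : term -> term -> term -> term
| Deca  : term -> term -> term
| Pub   : term -> term
| Priv  : term -> term
| Pair  : term -> term -> term
| Pi1   : term -> term
| Pi2   : term -> term
| Sign  : term -> term -> term
| Check : term -> term -> term -> term
| Retr  : term -> term.

Definition ok : term := Cst 0.

Definition args (t : term) : list term :=
  match t with
  | Var _ | Nam _ | Cst _ => []
  | Enc a b c | Enca a b c | Check a b c => [a; b; c]
  | Dec a b | Deca a b | Pair a b | Sign a b => [a; b]
  | Pub a | Priv a | Pi1 a | Pi2 a | Retr a => [a]
  end.

(* Positions: sequences of positive integers; T|_p *)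
Fixpoint subterm_at (t : term) (p : list nat) : option term :=
  match p with
  | [] => Some t
  | i :: p' =>
      match i with
      | 0 => None
      | S j => match nth_error (args t) j with
               | Some u => subterm_at u p'
               | None => None
               end
      end
  end.

Definition subterm (u t : term) : Prop := exists p, subterm_at t p = Some u.

Definition is_destructor (t : term) : Prop :=
  match t with
  | Pi1 _ | Pi2 _ | Dec _ _ | Deca _ _ | Check _ _ _ | Retr _ => True
  | _ => False
  end.

Definition is_priv (t : term) : Prop :=
  match t with Priv _ => True | _ => False end.

Definition is_encryption (t : term) : Prop :=
  match t with Enc _ _ _ | Enca _ _ _ => True | _ => False end.

Definition occurs_name (n : nat) (t : term) : Prop := subterm (Nam n) t.
Definition occurs_var (x : nat) (t : term) : Prop := subterm (Var x) t.

Definition ground (t : term) : Prop := forall x, ~ occurs_var x t.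

(* T[s/M]: replace every occurrence of the name s by M *)
Fixpoint rname (s : nat) (M t : term) : term :=
  match t with
  | Var x => Var x
  | Nam n => if Nat.eqb n s then M else Nam n
  | Cst c => Cst c
  | Enc a b c => Enc (rname s M a) (rname s M b) (rname s M c)
  | Dec a b => Dec (rname s M a) (rname s M b)
  | Enca a b c => Enca (rname s M a) (rname s M b) (rname s M c)
  | Deca a b => Deca (rname s M a) (rname s M b)
  | Pub a => Pub (rname s M a)
  | Priv a => Priv (rname s M a)
  | Pair a b => Pair (rname s M a) (rname s M b)
  | Pi1 a => Pi1 (rname s M a)
  | Pi2 a => Pi2 (rname s M a)
  | Sign a b => Sign (rname s M a) (rname s M b)
  | Check a b c => Check (rname s M a) (rname s M b) (rname s M c)
  | Retr a => Retr (rname s M a)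
  end.

Definition subst := list (nat * term).
Definition dom (sg : subst) : list nat := map fst sg.
Definition ran (sg : subst) : list term := map snd sg.

Fixpoint lookup (sg : subst) (x : nat) : option term :=
  match sg with
  | [] => None
  | (y, T) :: sg' => if Nat.eqb x y then Some T else lookup sg' x
  end.

(* U sigma  (one application of sigma; variables outside dom unchanged) *)
Fixpoint app_sub (sg : subst) (t : term) : term :=
  match t with
  | Var x => match lookup sg x with Some T => T | None => Var x end
  | Nam n => Nam n
  | Cst c => Cst c
  | Enc a b c => Enc (app_sub sg a) (app_sub sg b) (app_sub sg c)
  | Dec a b => Dec (app_sub sg a) (app_sub sg b)
  | Enca a b c => Enca (app_sub sg a) (app_sub sg b) (app_sub sg c)
  | Deca a b => Deca (app_sub sg a) (app_sub sg b)
  | Pub a => Pub (app_sub sg a)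
  | Priv a => Priv (app_sub sg a)
  | Pair a b => Pair (app_sub sg a) (app_sub sg b)
  | Pi1 a => Pi1 (app_sub sg a)
  | Pi2 a => Pi2 (app_sub sg a)
  | Sign a b => Sign (app_sub sg a) (app_sub sg b)
  | Check a b c => Check (app_sub sg a) (app_sub sg b) (app_sub sg c)
  | Retr a => Retr (app_sub sg a)
  end.

(* acyclic: the "y occurs in x sigma" relation on dom(sigma) has no cycle,
   i.e. it is ranked by some function into nat *)
Definition acyclic (sg : subst) : Prop :=
  exists rk : nat -> nat,
    forall x y T, In (x, T) sg -> In y (dom sg) -> occurs_var y T -> rk y < rk x.

(* a frame  nu n~. sigma : n~ a finite set of names (list), sigma a
   substitution (functional: no variable bound twice) that is acyclic *)
Definition is_frame (ns : list nat) (sg : subst) : Prop :=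
  NoDup (dom sg) /\ acyclic sg.

Inductive eqE : term -> term -> Prop :=
| eqE_refl  : forall t, eqE t t
| eqE_sym   : forall t u, eqE t u -> eqE u t
| eqE_trans : forall t u v, eqE t u -> eqE u v -> eqE t v
| eqE_pi1   : forall z1 z2, eqE (Pi1 (Pair z1 z2)) z1
| eqE_pi2   : forall z1 z2, eqE (Pi2 (Pair z1 z2)) z2
| eqE_dec   : forall z1 z2 z3, eqE (Dec (Enc z1 z2 z3) z2) z1
| eqE_deca  : forall z1 z2 z3, eqE (Deca (Enca z1 (Pub z2) z3) (Priv z2)) z1
| eqE_check : forall z1 z2, eqE (Check z1 (Sign z1 (Priv z2)) (Pub z2)) ok
| eqE_retr  : forall z1 z2, eqE (Retr (Sign z1 z2)) z1
| eqE_Enc   : forall a a' b b' c c', eqE a a' -> eqE b b' -> eqE c c' -> eqE (Enc a b c) (Enc a' b' c')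
| eqE_Dec   : forall a a' b b', eqE a a' -> eqE b b' -> eqE (Dec a b) (Dec a' b')
| eqE_Enca  : forall a a' b b' c c', eqE a a' -> eqE b b' -> eqE c c' -> eqE (Enca a b c) (Enca a' b' c')
| eqE_Deca  : forall a a' b b', eqE a a' -> eqE b b' -> eqE (Deca a b) (Deca a' b')
| eqE_Pub   : forall a a', eqE a a' -> eqE (Pub a) (Pub a')
| eqE_Priv  : forall a a', eqE a a' -> eqE (Priv a) (Priv a')
| eqE_Pair  : forall a a' b b', eqE a a' -> eqE b b' -> eqE (Pair a b) (Pair a' b')
| eqE_Pi1   : forall a a', eqE a a' -> eqE (Pi1 a) (Pi1 a')
| eqE_Pi2   : forall a a', eqE a a' -> eqE (Pi2 a) (Pi2 a')
| eqE_Sign  : forall a a' b b', eqE a a' -> eqE b b' -> eqE (Sign a b) (Sign a' b')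
| eqE_Check : forall a a' b b' c c', eqE a a' -> eqE b b' -> eqE c c' -> eqE (Check a b c) (Check a' b' c')
| eqE_Retr  : forall a a', eqE a a' -> eqE (Retr a) (Retr a').

Inductive deduc (ns : list nat) (sg : subst) : term -> Prop :=
| d_var   : forall x T, lookup sg x = Some T -> deduc ns sg T
| d_name  : forall n, ~ In n ns -> deduc ns sg (Nam n)
| d_cst   : forall c, deduc ns sg (Cst c)
| d_Enc   : forall a b c, deduc ns sg a -> deduc ns sg b -> deduc ns sg c -> deduc ns sg (Enc a b c)
| d_Dec   : forall a b, deduc ns sg a -> deduc ns sg b -> deduc ns sg (Dec a b)
| d_Enca  : forall a b c, deduc ns sg a -> deduc ns sg b -> deduc ns sg c -> deduc ns sg (Enca a b c)
| d_Deca  : forall a b, deduc ns sg a -> deduc ns sg b -> deduc ns sg (Deca a b)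
| d_Pub   : forall a, deduc ns sg a -> deduc ns sg (Pub a)
| d_Pair  : forall a b, deduc ns sg a -> deduc ns sg b -> deduc ns sg (Pair a b)
| d_Pi1   : forall a, deduc ns sg a -> deduc ns sg (Pi1 a)
| d_Pi2   : forall a, deduc ns sg a -> deduc ns sg (Pi2 a)
| d_Sign  : forall a b, deduc ns sg a -> deduc ns sg b -> deduc ns sg (Sign a b)
| d_Check : forall a b c, deduc ns sg a -> deduc ns sg b -> deduc ns sg c -> deduc ns sg (Check a b c)
| d_Retr  : forall a, deduc ns sg a -> deduc ns sg (Retr a)
| d_eqE   : forall t u, deduc ns sg t -> eqE t u -> deduc ns sg u.

Definition public (ns : list nat) (t : term) : Prop :=
  (forall n, In n ns -> ~ occurs_name n t) /\
  (forall u, subterm u t -> ~ is_priv u).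

Definition third_arg (t : term) : option term :=
  match t with Enc _ _ r | Enca _ _ r => Some r | _ => None end.

Definition enc_occ (U : term) (q : list nat) : Prop :=
  exists e, subterm_at U q = Some e /\ is_encryption e.

Definition agent_enc (ms : list nat) (U : term) (q : list nat) : Prop :=
  exists n, subterm_at U (q ++ [3]) = Some (Nam n) /\ In n ms.

Definition prob_enc (S : list term) (U : term) (q : list nat) : Prop :=
  forall V p R, In V S -> subterm_at U (q ++ [3]) = Some R ->
    subterm_at V p = Some R ->
    exists q', p = q' ++ [3] /\ subterm_at V q' = subterm_at U q.

Definition remove_name (s : nat) (ns : list nat) : list nat :=
  filter (fun n => negb (Nat.eqb n s)) ns.

Definition frame_subterm (sg : subst) (u : term) : Prop :=
  exists T, In T (ran sg) /\ subterm u T.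

Definition well_formed (ns : list nat) (sg : subst) (s : nat) : Prop :=
  (forall T q, In T (ran sg) -> enc_occ T q ->
     agent_enc (remove_name s ns) T q /\ prob_enc (ran sg) T q) /\
  (forall a b c, frame_subterm sg (Enc a b c) -> ~ occurs_name s b /\ ~ occurs_name s c) /\
  (forall a b c, frame_subterm sg (Enca a b c) -> ~ occurs_name s b /\ ~ occurs_name s c) /\
  (forall a b, frame_subterm sg (Sign a b) -> ~ occurs_name s b) /\
  (forall w, frame_subterm sg (Pub w) -> ~ occurs_name s w) /\
  (forall w, frame_subterm sg (Priv w) -> ~ occurs_name s w) /\
  (forall u, frame_subterm sg u -> ~ is_destructor u).

(* Write A^ for A[s/M].  Call a term faithful if it is either an instance
   Wσ of a non-variable term W free of the restricted names, or a subterm of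
   the frame that is deducible or does not contain s.  Both Uσ and Vσ are
   faithful, and ^ is injective on faithful terms, by induction on the term.
   Faithfulness passes to the arguments of non-encryptions: the deducible
   frame subterms are closed under the projections and retrieve, while keys
   of pub, priv and sign are s-free by well-formedness.  For encryptions,
   well-formedness attaches to every encryption E of the frame a restricted
   nonce r <> s that occurs in the frame only as the third argument of E, and
   never as a whole entry of σ.  So if one side is a frame encryption, the
   other side has the same nonce and is equal to it: it cannot be an instance
   Wσ, whose third argument is neither a restricted name nor an entry of σ. *)

From Stdlib Require Import List Arith.
Import ListNotations.

Lemma subterm_at_app t p p' :
  subterm_at t (p ++ p') =
  match subterm_at t p with Some u => subterm_at u p' | None => None end.
Proof.
  revert t; induction p as [|[|i] p IH]; intros t; simpl; auto.
  destruct (nth_error (args t) i); auto.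
Qed.

Lemma subterm_refl t : subterm t t.
Proof. exists []; reflexivity. Qed.

Lemma subterm_trans u a t : subterm u a -> subterm a t -> subterm u t.
Proof.
  intros [p1 H1] [p2 H2]. exists (p2 ++ p1). rewrite subterm_at_app, H2; auto.
Qed.

Lemma subterm_arg a t : In a (args t) -> subterm a t.
Proof.
  intros Hin. destruct (In_nth_error _ _ Hin) as [i Hi].
  exists [S i]. simpl. rewrite Hi. reflexivity.
Qed.

Lemma subterm_at_3_encryption E : is_encryption E -> subterm_at E [3] = third_arg E.
Proof. destruct E; simpl; easy. Qed.

Lemma is_encryption_dec t : is_encryption t \/ ~ is_encryption t.
Proof. destruct t; simpl; tauto. Qed.

Lemma not_occurs_name_arg n t a : ~ occurs_name n t -> In a (args t) -> ~ occurs_name n a.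
Proof. intros H Ha Ho. apply H. eapply subterm_trans; eauto using subterm_arg. Qed.

Lemma lookup_ran sg x T : lookup sg x = Some T -> In T (ran sg).
Proof.
  induction sg as [|[y U] sg IH]; simpl; [discriminate|].
  destruct (x =? y); [intros H; injection H; auto | auto].
Qed.

Lemma lookup_dom sg x : In x (dom sg) -> exists T, lookup sg x = Some T.
Proof.
  induction sg as [|[y U] sg IH]; simpl; [tauto|].
  intros [H|H]; destruct (Nat.eqb_spec x y); eauto; subst; congruence.
Qed.

Lemma args_app_sub sg W :
  (forall x, W <> Var x) -> args (app_sub sg W) = map (app_sub sg) (args W).
Proof. intros H; destruct W; simpl; auto. now destruct (H n). Qed.

Lemma frame_subterm_arg sg A a : frame_subterm sg A -> In a (args A) -> frame_subterm sg a.
Proof.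
  intros [T [HT HA]] Ha. exists T; split; auto.
  eapply subterm_trans; eauto using subterm_arg.
Qed.

Lemma third_arg_rname s M A :
  is_encryption A -> third_arg (rname s M A) = option_map (rname s M) (third_arg A).
Proof. destruct A; easy. Qed.

Lemma rname_preserves_encryption s M A : is_encryption A -> is_encryption (rname s M A).
Proof. destruct A; easy. Qed.

Lemma rname_encryption s M A :
  A <> Nam s -> is_encryption (rname s M A) -> is_encryption A.
Proof.
  destruct A; simpl; auto.
  destruct (Nat.eqb_spec n s) as [->|]; simpl; tauto.
Qed.

Lemma rname_eq_Nam s M t r : ~ occurs_name r M -> rname s M t = Nam r -> t = Nam r.
Proof.
  intros HM H. destruct t; simpl in H; try discriminate.
  destruct (n =? s); auto. subst. destruct (HM (subterm_refl _)).
Qed.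

Definition avoids_names (ns : list nat) (W : term) : Prop :=
  forall n, In n ns -> ~ occurs_name n W.

Definition vars_in_dom (sg : subst) (W : term) : Prop :=
  forall x, occurs_var x W -> In x (dom sg).

Lemma avoids_names_arg ns W a : avoids_names ns W -> In a (args W) -> avoids_names ns a.
Proof. intros H Ha n Hn. eapply not_occurs_name_arg; eauto. Qed.

Lemma vars_in_dom_arg sg W a : vars_in_dom sg W -> In a (args W) -> vars_in_dom sg a.
Proof. intros H Ha x Ho. apply H. eapply subterm_trans; eauto using subterm_arg. Qed.

Definition nonvar_instance (ns : list nat) (sg : subst) (A : term) : Prop :=
  exists W, A = app_sub sg W /\ avoids_names ns W /\ vars_in_dom sg W /\
            forall x, W <> Var x.

Definition safe_frame_subterm (ns : list nat) (sg : subst) (s : nat) (A : term) : Prop :=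
  frame_subterm sg A /\ (deduc ns sg A \/ ~ occurs_name s A).

Definition faithful (ns : list nat) (sg : subst) (s : nat) (A : term) : Prop :=
  nonvar_instance ns sg A \/ safe_frame_subterm ns sg s A.

Section WellFormedFrame.

Variables (ns : list nat) (sg : subst) (s : nat).
Hypothesis WF : well_formed ns sg s.

Lemma frame_encryption_nonce E :
  frame_subterm sg E -> is_encryption E ->
  exists r, third_arg E = Some (Nam r) /\ In r ns /\ r <> s.
Proof.
  intros [T [HT [q Hq]]] HE.
  destruct (proj1 WF T q HT) as [[n [Hn Hin]] _]; [exists E; auto|].
  rewrite subterm_at_app, Hq, subterm_at_3_encryption in Hn by auto.
  apply filter_In in Hin as [Hin Hb].
  exists n; repeat split; auto.
  intros ->. rewrite Nat.eqb_refl in Hb. discriminate.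
Qed.

Lemma frame_nonce_occurrence E T p r :
  frame_subterm sg E -> is_encryption E -> third_arg E = Some (Nam r) ->
  In T (ran sg) -> subterm_at T p = Some (Nam r) ->
  exists q, p = q ++ [3] /\ subterm_at T q = Some E.
Proof.
  intros [T0 [HT0 [q0 Hq0]]] HE H3 HT Hp.
  destruct (proj1 WF T0 q0 HT0) as [_ Hprob]; [exists E; auto|].
  destruct (Hprob T p (Nam r) HT) as [q [-> Hq]]; auto.
  - rewrite subterm_at_app, Hq0, subterm_at_3_encryption; auto.
  - exists q; split; congruence.
Qed.

Lemma frame_encryption_unique E E' r :
  frame_subterm sg E -> frame_subterm sg E' -> is_encryption E -> is_encryption E' ->
  third_arg E = Some (Nam r) -> third_arg E' = Some (Nam r) -> E = E'.
Proof.
  intros HE [T [HT [q Hq]]] Henc Henc' H3 H3'.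
  destruct (frame_nonce_occurrence E T (q ++ [3]) r HE Henc H3 HT) as [q' [Hqq' Hq']].
  - rewrite subterm_at_app, Hq, subterm_at_3_encryption; auto.
  - apply app_inj_tail in Hqq' as [-> _]. congruence.
Qed.

Lemma frame_nonce_not_app_sub E r W :
  frame_subterm sg E -> is_encryption E -> third_arg E = Some (Nam r) -> In r ns ->
  avoids_names ns W -> app_sub sg W <> Nam r.
Proof.
  intros HE Henc H3 Hr HW Heq.
  destruct W; simpl in Heq; try discriminate.
  - destruct (lookup sg n) as [T|] eqn:Hl; [subst T|discriminate].
    destruct (frame_nonce_occurrence E (Nam r) [] r HE Henc H3) as [[|] [Hq _]];
      eauto using lookup_ran; discriminate.
  - injection Heq as ->. exact (HW r Hr (subterm_refl _)).
Qed.

Lemma faithful_app_sub W : avoids_names ns W -> vars_in_dom sg W -> faithful ns sg s (app_sub sg W).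
Proof.
  intros HN HV. destruct W; try (left; eexists; repeat split; eauto; discriminate).
  destruct (lookup_dom sg n) as [T HT]; [apply HV, subterm_refl|].
  right. simpl. rewrite HT. split.
  - exists T; split; [eapply lookup_ran; eauto | apply subterm_refl].
  - left. eapply d_var; eauto.
Qed.

Lemma nonvar_instance_args A a :
  nonvar_instance ns sg A -> In a (args A) -> faithful ns sg s a.
Proof.
  intros [W [-> [HN [HV HW]]]] Ha.
  rewrite args_app_sub in Ha by auto.
  apply in_map_iff in Ha as [W' [<- HW']].
  apply faithful_app_sub; eauto using avoids_names_arg, vars_in_dom_arg.
Qed.

Lemma nonvar_instance_third_arg A c :
  nonvar_instance ns sg A -> third_arg A = Some c ->
  exists W, c = app_sub sg W /\ avoids_names ns W.
Proof.
  intros [W [-> [HN [_ HW]]]] H3.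
  destruct W; simpl in H3; try discriminate; [now destruct (HW n) | |];
    injection H3 as <-;
    eexists; split; eauto; eapply avoids_names_arg; eauto; simpl; auto.
Qed.

(* Only the deducible case needs work: among non-encryptions the frame
   contains no destructors, so the only constructors left are the leaves,
   pub, priv, pairs and signatures. *)
Lemma safe_frame_subterm_args A a :
  safe_frame_subterm ns sg s A -> ~ is_encryption A -> In a (args A) ->
  safe_frame_subterm ns sg s a.
Proof.
  intros [Hf Hd] Henc Ha. split; [eauto using frame_subterm_arg|].
  destruct Hd as [Hd|Hd]; [|eauto using not_occurs_name_arg].
  destruct WF as (_ & _ & _ & Hsign & Hpub & Hpriv & Hnodestr).
  destruct A; simpl in Ha; try tauto;
    try (now destruct (Henc I)); try (now destruct (Hnodestr _ Hf I)).
  - destruct Ha as [<-|[]]. right. eapply Hpub; eauto.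
  - destruct Ha as [<-|[]]. right. eapply Hpriv; eauto.
  - destruct Ha as [<-|[<-|[]]]; left.
    + eapply d_eqE; [apply d_Pi1; eauto | apply eqE_pi1].
    + eapply d_eqE; [apply d_Pi2; eauto | apply eqE_pi2].
  - destruct Ha as [<-|[<-|[]]].
    + left. eapply d_eqE; [apply d_Retr; eauto | apply eqE_retr].
    + right. eapply Hsign; eauto.
Qed.

Lemma faithful_args A a :
  faithful ns sg s A -> ~ is_encryption A -> In a (args A) -> faithful ns sg s a.
Proof.
  intros [HA|HA] Henc Ha; [eapply nonvar_instance_args; eauto|].
  right. eapply safe_frame_subterm_args; eauto.
Qed.

Hypothesis secret_in_ns : In s ns.
Hypothesis secret_not_deducible : ~ deduc ns sg (Nam s).

Lemma faithful_not_secret A : faithful ns sg s A -> A <> Nam s.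
Proof.
  intros [[W [HA [HN [_ HW]]]] | [_ [Hd|Hs]]] ->; auto.
  - destruct W; simpl in HA; try discriminate.
    + exact (HW n eq_refl).
    + injection HA as Hn; subst n. exact (HN s secret_in_ns (subterm_refl _)).
  - exact (Hs (subterm_refl _)).
Qed.

Variable M : term.
Hypothesis M_avoids_names : avoids_names ns M.

Lemma safe_encryption_rname_inj A B :
  safe_frame_subterm ns sg s A -> faithful ns sg s B ->
  is_encryption A -> is_encryption B -> rname s M A = rname s M B -> A = B.
Proof.
  intros [HfA _] FB HencA HencB Heq.
  destruct (frame_encryption_nonce A HfA HencA) as [r [H3 [Hr Hrs]]].
  assert (H3B : option_map (rname s M) (third_arg B) = Some (Nam r)).
  { rewrite <- third_arg_rname, <- Heq, third_arg_rname, H3 by assumption. simpl.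
    now rewrite (proj2 (Nat.eqb_neq r s) Hrs). }
  destruct (third_arg B) as [c|] eqn:HcB; [|discriminate].
  injection H3B as H3B. apply rname_eq_Nam in H3B; [subst c | exact (M_avoids_names r Hr)].
  destruct FB as [IB | [HfB _]].
  - destruct (nonvar_instance_third_arg B _ IB HcB) as [W [HW HN]].
    destruct (frame_nonce_not_app_sub A r W HfA HencA H3 Hr HN); auto.
  - eapply frame_encryption_unique; eauto.
Qed.

Lemma faithful_rname_cases A B :
  faithful ns sg s A -> faithful ns sg s B -> rname s M A = rname s M B ->
  A = B \/ (forall a, In a (args A) -> faithful ns sg s a) /\
           (forall b, In b (args B) -> faithful ns sg s b).
Proof.
  intros FA FB Heq.
  destruct (is_encryption_dec A) as [HencA|HencA].
  - assert (HencB : is_encryption B).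
    { apply (rname_encryption s M); [now apply faithful_not_secret|].
      rewrite <- Heq. now apply rname_preserves_encryption. }
    destruct FA as [IA|SA]; [destruct FB as [IB|SB]|].
    + right; split; intros x Hx; [apply (nonvar_instance_args A) | apply (nonvar_instance_args B)];
        assumption.
    + left; symmetry; apply safe_encryption_rname_inj; auto; left; auto.
    + left; apply safe_encryption_rname_inj; auto.
  - assert (HencB : ~ is_encryption B).
    { intros HencB. apply HencA, (rname_encryption s M); [now apply faithful_not_secret|].
      rewrite Heq. now apply rname_preserves_encryption. }
    right; split; intros x Hx; [apply (faithful_args A) | apply (faithful_args B)]; assumption.
Qed.

Lemma faithful_rname_inj A : forall B,
  faithful ns sg s A -> faithful ns sg s B -> rname s M A = rname s M B -> A = B.
Proof.
  induction A; intros B FA FB Heq;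
    destruct (faithful_rname_cases _ _ FA FB Heq) as [-> | [HA HB]]; auto;
    pose proof (faithful_not_secret _ FA); pose proof (faithful_not_secret _ FB);
    destruct B; simpl in Heq;
    repeat match type of Heq with context [?n =? s] =>
      destruct (Nat.eqb_spec n s); [congruence|] end;
    try discriminate; injection Heq; intros; subst; f_equal;
    match goal with IH : forall B, _ -> _ -> rname s M ?a = _ -> ?a = B |- ?a = _ =>
      apply IH; [apply HA | apply HB | assumption]; simpl; tauto end.
Qed.

End WellFormedFrame.

Theorem lemma2p7 (ns : list nat) (sg : subst) (s : nat) (U V M : term) :
  is_frame ns sg ->
  In s ns ->
  well_formed ns sg s ->
  ~ deduc ns sg (Nam s) ->
  public ns U -> public ns V -> public ns M ->
  (forall x, occurs_var x U -> In x (dom sg)) ->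
  (forall x, occurs_var x V -> In x (dom sg)) ->
  ground M ->
  rname s M (app_sub sg U) = rname s M (app_sub sg V) ->
  app_sub sg U = app_sub sg V.
Proof.
  intros _ Hs WF Hd [HU _] [HV _] [HM _] HdU HdV _ Heq.
  apply (faithful_rname_inj ns sg s WF Hs Hd M HM); auto;
    apply faithful_app_sub; assumption.
Qed.
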